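(* Let $G=(V,E)$ be a finite graph, $\psi\in C^1((0,\infty))$ and $d>0$. The following are equivalent: (1) $G$ satisfies the $CD\psi(d,0)$ inequality. (2) For every positive solution $u$ to the heat equation on $G$ and all $t\ge 0$, \[ \mathcal{L}\left(-u\,\Delta^\psi u\right)\ \ge\ \frac{2}{d}\,u\,\left(\Delta^\psi u\right)^2 . \]
   Context: A finite graph $G=(V,E)$ consists of a finite set $V$ and an irreflexive symmetric relation $E\subset V\times V$; write $v\sim w$ if $(v,w)\in E$. $C(V)$ denotes real functions on $V$, $C^+(V)$ the positive ones. Laplacian: $\Delta f(v)=\sum_{w\sim v}(f(w)-f(v))$. For $\psi\in C^1((0,\infty))$, $f\in C^+(V)$: $(\Delta^\psi f)(v):=\Delta\big[\psi\big(\tfrac{f}{f(v)}\big)\big](v)$; $(\Omega^\psi f)(v):=\Delta\Big[\psi'\big(\tfrac{f}{f(v)}\big)\cdot\tfrac{f}{f(v)}\cdot\big(\tfrac{\Delta f}{f}-\tfrac{(\Delta f)(v)}{f(v)}\big)\Big](v)$; $2\Gamma_2^\psi(f):=\Omega^\psi f+\frac{\Delta f\,\Delta^\psi f}{f}-\frac{\Delta(f\,\Delta^\psi f)}{f}$. $G$ satisfies $CD\psi(d,0)$ if $\Gamma_2^\psi(f)\ge\frac1d(\Delta^\psi f)^2$ pointwise for all $f\in C^+(V)$. The heat operator is $\mathcal{L}(u)=\Delta u-\partial_t u$; a solution to the heat equation on $G$ is a function $u:V\times[0,\infty)\to\mathbb{R}$, continuously differentiable in $t$, with $\mathcal{L}(u)=0$.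 Operators $\Delta^\psi,\Gamma_2^\psi$ applied to $u$ act on $u(\cdot,t)$ for each fixed $t$. *)

From Stdlib Require Import Reals List.
Open Scope R_scope.

Record fgraph := {
  V : Type;
  verts : list V;
  verts_nodup : NoDup verts;
  verts_all : forall v : V, In v verts;
  adj : V -> V -> bool;
  adj_sym : forall v w, adj v w = adj w v;
  adj_irrefl : forall v, adj v v = false
}.

Definition sumV (G : fgraph) (F : V G -> R) : R :=
  fold_right (fun v acc => F v + acc) 0 (verts G).

Definition lap (G : fgraph) (f : V G -> R) (v : V G) : R :=
  sumV G (fun w => if adj G v w then f w - f v else 0).

Definition lap_psi (G : fgraph) (psi : R -> R) (f : V G -> R) (v : V G) : R :=
  lap G (fun w => psi (f w / f v)) v.

Definition Omega_psi (G : fgraph) (dpsi : R -> R) (f : V G -> R) (v : V G) : R :=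
  lap G (fun w => dpsi (f w / f v) * (f w / f v)
                  * (lap G f w / f w - lap G f v / f v)) v.

Definition Gamma2_psi (G : fgraph) (psi dpsi : R -> R) (f : V G -> R) (v : V G) : R :=
  / 2 * (Omega_psi G dpsi f v
         + lap G f v * lap_psi G psi f v / f v
         - lap G (fun w => f w * lap_psi G psi f w) v / f v).

Definition CD_psi (G : fgraph) (psi dpsi : R -> R) (d : R) : Prop :=
  forall f : V G -> R, (forall v, 0 < f v) ->
    forall v, Gamma2_psi G psi dpsi f v >= / d * (lap_psi G psi f v) ^ 2.

Definition C1_pos (psi dpsi : R -> R) : Prop :=
  (forall x, 0 < x -> derivable_pt_lim psi x (dpsi x)) /\
  (forall x, 0 < x -> continuity_pt dpsi x).

Definition deriv_nonneg (g : R -> R) (t l : R) : Prop :=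
  forall eps, 0 < eps -> exists delta, 0 < delta /\
    forall h, h <> 0 -> Rabs h < delta -> 0 <= t + h ->
      Rabs ((g (t + h) - g t) / h - l) < eps.

Definition cont_nonneg (g : R -> R) (t : R) : Prop :=
  forall eps, 0 < eps -> exists delta, 0 < delta /\
    forall s, 0 <= s -> Rabs (s - t) < delta -> Rabs (g s - g t) < eps.

(* u : V × [0,∞) → R, continuously differentiable in t, with Δu - ∂_t u = 0
   (values of u at negative times are irrelevant). *)
Definition heat_solution (G : fgraph) (u : V G -> R -> R) : Prop :=
  exists ut : V G -> R -> R,
    (forall v t, 0 <= t -> deriv_nonneg (u v) t (ut v t)) /\
    (forall v t, 0 <= t -> cont_nonneg (ut v) t) /\
    (forall v t, 0 <= t -> lap G (fun w => u w t) v - ut v t = 0).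

From Coquelicot Require Import Coquelicot.
From Stdlib Require Import Reals Lra List FunctionalExtensionality.
Open Scope R_scope.

(* Along a positive solution [u] of the heat equation, [d/dt (- u Δ^ψ u)] equals
   [- (Δu Δ^ψ u + u Ω^ψ u)], so that [L(- u Δ^ψ u) = 2 u Γ_2^ψ(u)] pointwise; as
   [u > 0], the heat inequality is CDψ(d,0) multiplied by [2 u].  Conversely every
   positive [f] is the initial value of the positive heat solution
   [e^{tΔ} f = e^{-Nt} e^{t(Δ+N)} f] ([N] the number of vertices; [Δ + N] has
   nonnegative coefficients), and the heat inequality at [t = 0] is CDψ(d,0) at [f]. *)

Definition lsum {A} (l : list A) (F : A -> R) : R :=
  fold_right (fun x acc => F x + acc) 0 l.

Lemma lsum_ext {A} (l : list A) F H : (forall x, F x = H x) -> lsum l F = lsum l H.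
Proof. intros E; induction l; simpl; [reflexivity | rewrite E, IHl; reflexivity]. Qed.

Lemma lsum_plus {A} (l : list A) F H : lsum l (fun x => F x + H x) = lsum l F + lsum l H.
Proof. induction l; simpl; [ring | rewrite IHl; ring]. Qed.

Lemma lsum_scal {A} (l : list A) c F : lsum l (fun x => c * F x) = c * lsum l F.
Proof. induction l; simpl; [ring | rewrite IHl; ring]. Qed.

Lemma lsum_const {A} (l : list A) c : lsum l (fun _ => c) = INR (length l) * c.
Proof. induction l; simpl length; [simpl; ring | rewrite S_INR; simpl; rewrite IHl; ring]. Qed.

Lemma lsum_le {A} (l : list A) F H : (forall x, F x <= H x) -> lsum l F <= lsum l H.
Proof. intros E; induction l; simpl; [lra | specialize (E a); lra]. Qed.

Lemma lsum_nonneg {A} (l : list A) F : (forall x, 0 <= F x) -> 0 <= lsum l F.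
Proof. intros E; induction l; simpl; [lra | specialize (E a); lra]. Qed.

Lemma lsum_In_le {A} (l : list A) F x : (forall y, 0 <= F y) -> In x l -> F x <= lsum l F.
Proof.
  intros E; induction l as [|a l IH]; simpl; [tauto |]. intros [-> | Hx].
  - pose proof (lsum_nonneg l F E); lra.
  - specialize (IH Hx); specialize (E a); lra.
Qed.

Lemma derivable_pt_lim_lsum {A} (l : list A) (F : A -> R -> R) dF t :
  (forall x, derivable_pt_lim (F x) t (dF x)) ->
  derivable_pt_lim (fun s => lsum l (fun x => F x s)) t (lsum l dF).
Proof.
  intros E; induction l; simpl.
  - apply derivable_pt_lim_const.
  - apply (derivable_pt_lim_plus (F a) (fun s => lsum l (fun x => F x s))); auto.
Qed.

Lemma is_pseries_zero t : is_pseries (fun _ : nat => 0) t 0.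
Proof.
  pose proof (is_series_scal_l 0 _ _ (is_series_geom (/ 2) ltac:(rewrite Rabs_pos_eq; lra))) as H.
  change (scal 0 (/ (1 - / 2))) with (0 * / (1 - / 2)) in H. rewrite Rmult_0_l in H.
  eapply is_series_ext; [| exact H]. intros n. unfold scal; simpl; unfold mult; simpl. ring.
Qed.

Lemma is_pseries_lsum {A} (l : list A) (b : A -> nat -> R) t :
  (forall x, ex_pseries (b x) t) ->
  is_pseries (fun n => lsum l (fun x => b x n)) t (lsum l (fun x => PSeries (b x) t)).
Proof.
  intros Hb; induction l as [|a l IH]; simpl.
  - apply is_pseries_zero.
  - apply (is_pseries_plus (b a) _ t _ _ (PSeries_correct _ _ (Hb a)) IH).
Qed.

Lemma lap_ext G f g v : (forall w, f w = g w) -> lap G f v = lap G g v.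
Proof. intros E; apply lsum_ext; intros w; rewrite !E; reflexivity. Qed.

Lemma lap_scal G c f v : lap G (fun w => c * f w) v = c * lap G f v.
Proof.
  change (lsum (verts G) (fun w => if adj G v w then c * f w - c * f v else 0)
    = c * lsum (verts G) (fun w => if adj G v w then f w - f v else 0)).
  rewrite <- lsum_scal; apply lsum_ext; intros w; destruct (adj G v w); ring.
Qed.

Lemma derivable_pt_lim_lap G (F : V G -> R -> R) (dF : V G -> R) t v :
  (forall w, derivable_pt_lim (F w) t (dF w)) ->
  derivable_pt_lim (fun s => lap G (fun w => F w s) v) t (lap G dF v).
Proof.
  intros D; apply (derivable_pt_lim_lsum (verts G)
    (fun w s => if adj G v w then F w s - F v s else 0)); intros w.
  destruct (adj G v w).
  - apply (derivable_pt_lim_minus (F w) (F v)); auto.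
  - apply derivable_pt_lim_const.
Qed.

Lemma derivable_pt_lim_lap_psi G psi dpsi (U : V G -> R -> R) (dU : V G -> R) t v :
  (forall x, 0 < x -> derivable_pt_lim psi x (dpsi x)) ->
  (forall w, derivable_pt_lim (U w) t (dU w)) -> (forall w, 0 < U w t) ->
  derivable_pt_lim (fun s => lap_psi G psi (fun w => U w s) v) t
    (lap G (fun w => dpsi (U w t / U v t) * (U w t / U v t)
                     * (dU w / U w t - dU v / U v t)) v).
Proof.
  intros Hpsi DU Hpos.
  replace (lap G _ v) with (lap G (fun w => dpsi (U w t / U v t)
                     * ((dU w * U v t - dU v * U w t) / (U v t)²)) v).
  - apply (derivable_pt_lim_lap G (fun w s => psi (U w s / U v s))); intros w.
    apply (derivable_pt_lim_comp (fun s => U w s / U v s) psi).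
    + apply (derivable_pt_lim_div (U w) (U v)); auto. specialize (Hpos v); lra.
    + apply Hpsi, Rdiv_lt_0_compat; auto.
  - apply lap_ext; intros w. pose proof (Hpos v); pose proof (Hpos w).
    unfold Rsqr; field; lra.
Qed.

(* Point reflection of [g] through [(0, g 0)] extends [g] from [[0, oo)] to [R]
   so that one-sided derivatives at [0] become two-sided ones. *)
Definition reflect_ext (g : R -> R) (s : R) : R :=
  if Rle_dec 0 s then g s else 2 * g 0 - g (- s).

Lemma reflect_ext_eq g s : 0 <= s -> reflect_ext g s = g s.
Proof. intros H; unfold reflect_ext; destruct (Rle_dec 0 s); [reflexivity | lra]. Qed.

Lemma derivable_pt_lim_reflect_ext g t l :
  0 <= t -> deriv_nonneg g t l -> derivable_pt_lim (reflect_ext g) t l.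
Proof.
  intros Ht D eps Heps. destruct (D eps Heps) as [del [Hdel Hq]].
  destruct (Rle_lt_or_eq_dec 0 t Ht) as [Hlt | <-].
  - assert (Hm : 0 < Rmin del t) by (apply Rmin_pos; lra).
    exists (mkposreal _ Hm); simpl; intros h Hh Ha.
    assert (Rabs h < del) by (eapply Rlt_le_trans; [exact Ha | apply Rmin_l]).
    assert (Hht : Rabs h < t) by (eapply Rlt_le_trans; [exact Ha | apply Rmin_r]).
    assert (0 <= t + h) by (apply Rabs_def2 in Hht; lra).
    rewrite !reflect_ext_eq by lra. apply Hq; auto.
  - exists (mkposreal _ Hdel); simpl; intros h Hh Ha.
    destruct (Rle_dec 0 h).
    + rewrite !reflect_ext_eq by lra. apply Hq; auto; lra.
    + unfold reflect_ext. destruct (Rle_dec 0 (0 + h)); [lra |]. destruct (Rle_dec 0 0); [| lra].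
      replace ((2 * g 0 - g (- (0 + h)) - g 0) / h) with ((g (0 + - h) - g 0) / - h).
      * apply Hq; [lra | rewrite Rabs_Ropp; auto | lra].
      * replace (- (0 + h)) with (0 + - h) by ring. field. lra.
Qed.

Lemma deriv_nonneg_of_derivable f g t l : 0 <= t -> derivable_pt_lim f t l ->
  (forall s, 0 <= s -> f s = g s) -> deriv_nonneg g t l.
Proof.
  intros Ht D E eps Heps. destruct (D eps Heps) as [del Hdel].
  exists del; split; [apply cond_pos |]. intros h H1 H2 H3.
  rewrite <- !E by lra. apply Hdel; auto.
Qed.

Lemma deriv_nonneg_unique g t l1 l2 :
  0 <= t -> deriv_nonneg g t l1 -> deriv_nonneg g t l2 -> l1 = l2.
Proof.
  intros Ht D1 D2. apply (uniqueness_limite (reflect_ext g) t);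
  apply derivable_pt_lim_reflect_ext; assumption.
Qed.

Lemma cont_nonneg_of_continuity g t : continuity_pt g t -> cont_nonneg g t.
Proof.
  intros H eps He. destruct (H eps He) as [del [Hdel Hb]]. exists del; split; [lra |].
  intros s _ Hs. destruct (Req_dec s t) as [-> | Hne].
  - rewrite Rminus_diag, Rabs_R0; lra.
  - apply (Hb s). split; [split; [exact I | auto] | exact Hs].
Qed.

Lemma deriv_nonneg_heat_lap_psi G psi dpsi u :
  C1_pos psi dpsi -> heat_solution G u -> (forall v t, 0 <= t -> 0 < u v t) ->
  forall t, 0 <= t -> forall v,
  deriv_nonneg (fun s => - u v s * lap_psi G psi (fun w => u w s) v) t
    (- (lap G (fun w => u w t) v * lap_psi G psi (fun w => u w t) v
        + u v t * Omega_psi G dpsi (fun w => u w t) v)).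
Proof.
  intros [Hpsi _] [ut [Dut [_ Heat]]] Hpos t Ht v.
  set (U := fun w => reflect_ext (u w)).
  assert (EU : forall s, 0 <= s -> (fun w => U w s) = (fun w => u w s))
    by (intros s Hs; extensionality w; apply reflect_ext_eq, Hs).
  assert (DU : forall w, derivable_pt_lim (U w) t (lap G (fun x => U x t) w)).
  { intros w. rewrite (EU t Ht). specialize (Heat w t Ht).
    replace (lap G _ w) with (ut w t) by lra.
    apply derivable_pt_lim_reflect_ext; auto. }
  apply (deriv_nonneg_of_derivable (fun s => - U v s * lap_psi G psi (fun w => U w s) v)).
  - exact Ht.
  - replace (u v t) with (U v t) by (apply reflect_ext_eq, Ht). rewrite <- (EU t Ht).
    replace (- _) with (- lap G (fun w => U w t) v * lap_psi G psi (fun w => U w t) v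
                         + - U v t * Omega_psi G dpsi (fun w => U w t) v) by ring.
    apply (derivable_pt_lim_mult (fun s => - U v s)
             (fun s => lap_psi G psi (fun w => U w s) v)).
    + apply (derivable_pt_lim_opp (U v)), DU.
    + apply derivable_pt_lim_lap_psi; auto.
      intros w. unfold U. rewrite reflect_ext_eq by exact Ht. auto.
  - intros s Hs. replace (U v s) with (u v s) by (symmetry; apply reflect_ext_eq, Hs).
    rewrite (EU s Hs). reflexivity.
Qed.

Lemma two_mul_Gamma2_psi G psi dpsi f v : 0 < f v ->
  2 * f v * Gamma2_psi G psi dpsi f v =
  lap G (fun w => - f w * lap_psi G psi f w) v
  + (lap G f v * lap_psi G psi f v + f v * Omega_psi G dpsi f v).
Proof.
  intros Hf.
  rewrite (lap_ext G _ (fun w => -1 * (f w * lap_psi G psi f w))) by (intros; ring).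
  rewrite lap_scal. unfold Gamma2_psi. field; lra.
Qed.

Definition nverts (G : fgraph) : R := INR (length (verts G)).

(* [Δ + nverts]: its coefficients are nonnegative, so [exp (t (Δ + nverts))]
   preserves positivity. *)
Definition shifted_lap (G : fgraph) (g : V G -> R) (v : V G) : R :=
  sumV G (fun w => if adj G v w then g w else g v).

Definition heat_coef (G : fgraph) (f : V G -> R) (v : V G) (n : nat) : R :=
  / INR (Factorial.fact n) * Nat.iter n (shifted_lap G) f v.

Definition shifted_heat (G : fgraph) (f : V G -> R) (v : V G) (t : R) : R :=
  PSeries (heat_coef G f v) t.

Definition heat_flow (G : fgraph) (f : V G -> R) (v : V G) (t : R) : R :=
  exp (- nverts G * t) * shifted_heat G f v t.

Lemma shifted_lapE G g v : shifted_lap G g v = lap G g v + nverts G * g v.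
Proof.
  unfold shifted_lap, nverts.
  change (lsum (verts G) (fun w => if adj G v w then g w else g v)
    = lsum (verts G) (fun w => if adj G v w then g w - g v else 0) + INR (length (verts G)) * g v).
  rewrite <- lsum_const, <- lsum_plus. apply lsum_ext; intros w; destruct (adj G v w); ring.
Qed.

Lemma shifted_lap_nonneg G g v : (forall w, 0 <= g w) -> 0 <= shifted_lap G g v.
Proof. intros Hg; apply lsum_nonneg; intros w; destruct (adj G v w); auto. Qed.

Lemma iter_shifted_lap_nonneg G f n v :
  (forall w, 0 <= f w) -> 0 <= Nat.iter n (shifted_lap G) f v.
Proof. intros Hf; revert v; induction n; intros v; simpl; auto using shifted_lap_nonneg. Qed.

Lemma sumV_shifted_lap_le G g :
  (forall w, 0 <= g w) -> sumV G (shifted_lap G g) <= 2 * nverts G * sumV G g.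
Proof.
  intros Hg. change (lsum (verts G) (shifted_lap G g) <= 2 * nverts G * lsum (verts G) g).
  apply Rle_trans with (lsum (verts G) (fun v => lsum (verts G) g + nverts G * g v)).
  - apply lsum_le; intros v. unfold nverts; rewrite <- lsum_const, <- lsum_plus.
    apply lsum_le; intros w. pose proof (Hg w); pose proof (Hg v); destruct (adj G v w); lra.
  - rewrite lsum_plus, lsum_const, lsum_scal. unfold nverts; lra.
Qed.

Lemma iter_shifted_lap_le G f n v : (forall w, 0 <= f w) ->
  Nat.iter n (shifted_lap G) f v <= (2 * nverts G) ^ n * sumV G f.
Proof.
  intros Hf.
  assert (Hsum : sumV G (Nat.iter n (shifted_lap G) f) <= (2 * nverts G) ^ n * sumV G f).
  { induction n; simpl; [lra |].
    eapply Rle_trans; [apply sumV_shifted_lap_le; intros; apply iter_shifted_lap_nonneg, Hf |].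
    pose proof (pos_INR (length (verts G))). rewrite (Rmult_assoc (2 * nverts G)).
    apply Rmult_le_compat_l; [unfold nverts; lra | exact IHn]. }
  eapply Rle_trans; [| exact Hsum].
  apply lsum_In_le; [intros; apply iter_shifted_lap_nonneg, Hf | apply verts_all].
Qed.

Lemma CV_disk_heat_coef G f v r : (forall w, 0 <= f w) -> CV_disk (heat_coef G f v) r.
Proof.
  intros Hf. unfold CV_disk.
  apply (@ex_series_le R_AbsRing R_CompleteNormedModule _
    (fun n => sumV G f * (/ INR (Factorial.fact n) * (2 * nverts G * Rabs r) ^ n))).
  - intros n. change (norm (Rabs (heat_coef G f v n * r ^ n)))
      with (Rabs (Rabs (heat_coef G f v n * r ^ n))).
    rewrite Rabs_Rabsolu, Rabs_mult, <- RPow_abs. unfold heat_coef.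
    pose proof (iter_shifted_lap_nonneg G f n v Hf); pose proof (iter_shifted_lap_le G f n v Hf).
    assert (0 < / INR (Factorial.fact n)) by (apply Rinv_0_lt_compat, INR_fact_lt_0).
    pose proof (pow_le (Rabs r) n (Rabs_pos r)).
    rewrite Rabs_pos_eq by (apply Rmult_le_pos; lra). rewrite Rpow_mult_distr.
    apply Rle_trans with (/ INR (Factorial.fact n) * ((2 * nverts G) ^ n * sumV G f) * Rabs r ^ n).
    + apply Rmult_le_compat_r; auto. apply Rmult_le_compat_l; lra.
    + right; ring.
  - assert (Hexp : ex_series (fun k => scal (pow_n (2 * nverts G * Rabs r) k) (/ INR (Factorial.fact k))))
      by (eexists; apply is_exp_Reals).
    apply (ex_series_scal_l (sumV G f)) in Hexp.
    eapply ex_series_ext; [| exact Hexp]. intros n. simpl. rewrite pow_n_pow.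
    change (scal ?a ?b) with (a * b); try change (scal ?a ?b) with (a * b); ring.
Qed.

Lemma CV_radius_heat_coef G f v t :
  (forall w, 0 <= f w) -> Rbar_lt (Rabs t) (CV_radius (heat_coef G f v)).
Proof.
  intros Hf. pose proof (proj1 (Lub_Rbar_correct (CV_disk (heat_coef G f v))) (Rabs t + 1)
    (CV_disk_heat_coef G f v _ Hf)) as H.
  change (Rbar_le (Rabs t + 1) (CV_radius (heat_coef G f v))) in H.
  destruct (CV_radius (heat_coef G f v)); simpl in *; auto; lra.
Qed.

Lemma derivable_pt_lim_shifted_heat G f v t : (forall w, 0 <= f w) ->
  derivable_pt_lim (shifted_heat G f v) t (shifted_lap G (fun w => shifted_heat G f w t) v).
Proof.
  intros Hf. apply is_derive_Reals.
  replace (shifted_lap G _ v) with (PSeries (PS_derive (heat_coef G f v)) t).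
  { apply is_derive_PSeries, CV_radius_heat_coef, Hf. }
  set (b := fun w n => if adj G v w then heat_coef G f w n else heat_coef G f v n).
  assert (Hb : forall w, ex_pseries (b w) t).
  { intros w; unfold b; destruct (adj G v w); apply CV_radius_inside, CV_radius_heat_coef, Hf. }
  apply is_pseries_unique.
  replace (shifted_lap G _ v) with (lsum (verts G) (fun w => PSeries (b w) t))
    by (apply lsum_ext; intros w; unfold b; destruct (adj G v w); reflexivity).
  eapply is_pseries_ext; [| exact (is_pseries_lsum (verts G) b t Hb)]. intros n.
  unfold PS_derive, b, heat_coef.
  rewrite (lsum_ext _ _ (fun w => / INR (Factorial.fact n) *
    (if adj G v w then Nat.iter n (shifted_lap G) f w else Nat.iter n (shifted_lap G) f v)))
    by (intros w; destruct (adj G v w); reflexivity).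
  rewrite lsum_scal. change (Factorial.fact (S n)) with (S n * Factorial.fact n)%nat.
  rewrite mult_INR. pose proof (INR_fact_neq_0 n). pose proof (not_0_INR (S n) (Nat.neq_succ_0 n)).
  change (/ INR (Factorial.fact n) * shifted_lap G (Nat.iter n (shifted_lap G) f) v
          = INR (S n) * (/ (INR (S n) * INR (Factorial.fact n))
            * shifted_lap G (Nat.iter n (shifted_lap G) f) v)).
  field; auto.
Qed.

Lemma derivable_pt_lim_heat_flow G f v t : (forall w, 0 <= f w) ->
  derivable_pt_lim (heat_flow G f v) t (lap G (fun w => heat_flow G f w t) v).
Proof.
  intros Hf. unfold heat_flow. rewrite lap_scal.
  assert (Dexp : derivable_pt_lim (fun s => exp (- nverts G * s)) t
                   (exp (- nverts G * t) * (- nverts G * 1))).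
  { apply (derivable_pt_lim_comp (fun s => - nverts G * s) exp).
    - apply (derivable_pt_lim_scal id), derivable_pt_lim_id.
    - apply derivable_pt_lim_exp. }
  pose proof (derivable_pt_lim_mult _ _ t _ _ Dexp (derivable_pt_lim_shifted_heat G f v t Hf)) as D.
  rewrite shifted_lapE in D.
  replace (exp (- nverts G * t) * lap G (fun w => shifted_heat G f w t) v) with
    (exp (- nverts G * t) * (- nverts G * 1) * shifted_heat G f v t
     + exp (- nverts G * t) * (lap G (fun w => shifted_heat G f w t) v
                              + nverts G * shifted_heat G f v t)) by ring.
  exact D.
Qed.

Lemma shifted_heat_ge G f v t : (forall w, 0 <= f w) -> 0 <= t -> f v <= shifted_heat G f v t.
Proof.
  intros Hf Ht.
  assert (Hex : ex_series (fun k => heat_coef G f v k * t ^ k)).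
  { destruct (CV_radius_inside _ _ (CV_radius_heat_coef G f v t Hf)) as [l Hl].
    exists l. eapply is_series_ext; [| exact Hl]. intros n; simpl. rewrite pow_n_pow.
    change (scal ?a ?b) with (a * b); try change (scal ?a ?b) with (a * b); ring. }
  unfold shifted_heat, PSeries. rewrite Series_incr_1 by exact Hex.
  replace (heat_coef G f v 0 * t ^ 0) with (f v) by (unfold heat_coef; simpl; field).
  assert (0 <= Series (fun k => heat_coef G f v (S k) * t ^ S k)); [| lra].
  replace 0 with (Series (fun _ => 0))
    by (rewrite (Series_ext _ (fun _ => 0 * 0)), Series_scal_l by (intros; ring); ring).
  apply Series_le.
  - intros n; split; [lra |]. unfold heat_coef.
    apply Rmult_le_pos; [apply Rmult_le_pos |].
    + left; apply Rinv_0_lt_compat, INR_fact_lt_0.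
    + apply iter_shifted_lap_nonneg, Hf.
    + apply pow_le, Ht.
  - apply (ex_series_incr_1 (fun k => heat_coef G f v k * t ^ k)), Hex.
Qed.

Lemma heat_flow_pos G f v t : (forall w, 0 < f w) -> 0 <= t -> 0 < heat_flow G f v t.
Proof.
  intros Hf Ht. apply Rmult_lt_0_compat; [apply exp_pos |].
  assert (Hf' : forall w, 0 <= f w) by (intros w; specialize (Hf w); lra).
  pose proof (shifted_heat_ge G f v t Hf' Ht); specialize (Hf v); lra.
Qed.

Lemma heat_flow_solution G f : (forall w, 0 <= f w) -> heat_solution G (heat_flow G f).
Proof.
  intros Hf. exists (fun v t => lap G (fun w => heat_flow G f w t) v).
  assert (D : forall w t, derivable_pt_lim (heat_flow G f w) t
                            (lap G (fun x => heat_flow G f x t) w))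
    by (intros; apply derivable_pt_lim_heat_flow, Hf).
  split; [| split].
  - intros v t Ht. exact (deriv_nonneg_of_derivable _ _ t _ Ht (D v t) (fun _ _ => eq_refl)).
  - intros v t _. apply cont_nonneg_of_continuity, derivable_continuous_pt.
    eexists. apply derivable_pt_lim_lap. intros w. apply D.
  - intros; ring.
Qed.

Lemma heat_flow_0 G f : (fun w => heat_flow G f w 0) = f.
Proof.
  extensionality w. unfold heat_flow, shifted_heat.
  rewrite PSeries_0, Rmult_0_r, exp_0. unfold heat_coef; simpl; field.
Qed.

Lemma CD_ineq_scale x d g q : 0 < x -> 0 < d ->
  (2 * x * g >= 2 / d * x * q <-> g >= / d * q).
Proof.
  intros Hx Hd. replace (2 / d * x * q) with (2 * x * (/ d * q)) by (field; lra).
  split; intros H; apply Rle_ge; apply Rge_le in H.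
  - apply (Rmult_le_reg_l (2 * x)); lra.
  - apply Rmult_le_compat_l; lra.
Qed.

Theorem mainTheorem2 (G : fgraph) (psi dpsi : R -> R) (d : R) :
  C1_pos psi dpsi -> 0 < d ->
  (CD_psi G psi dpsi d <->
   forall u : V G -> R -> R,
     heat_solution G u ->
     (forall v t, 0 <= t -> 0 < u v t) ->
     forall t, 0 <= t -> forall v : V G,
       exists l : R,
         deriv_nonneg (fun s => - u v s * lap_psi G psi (fun w => u w s) v) t l /\
         lap G (fun w => - u w t * lap_psi G psi (fun x => u x t) w) v - l
           >= 2 / d * u v t * (lap_psi G psi (fun w => u w t) v) ^ 2).
Proof.
  intros Hpsi Hd. split.
  - intros HCD u Hu Hpos t Ht v. eexists; split.
    + exact (deriv_nonneg_heat_lap_psi G psi dpsi u Hpsi Hu Hpos t Ht v).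
    + unfold Rminus; rewrite Ropp_involutive, <- two_mul_Gamma2_psi by auto.
      apply CD_ineq_scale; [auto | exact Hd | apply HCD; auto].
  - intros Hheat f Hf v.
    assert (Hf0 : forall w, 0 <= f w) by (intros w; specialize (Hf w); lra).
    set (u := heat_flow G f).
    assert (Hpos : forall v t, 0 <= t -> 0 < u v t) by (intros; apply heat_flow_pos; auto).
    assert (Hu : heat_solution G u) by (apply heat_flow_solution, Hf0).
    destruct (Hheat u Hu Hpos 0 (Rle_refl 0) v) as [l [Hl Hineq]].
    rewrite (deriv_nonneg_unique _ _ _ _ (Rle_refl 0) Hl
               (deriv_nonneg_heat_lap_psi G psi dpsi u Hpsi Hu Hpos 0 (Rle_refl 0) v)) in Hineq.
    unfold Rminus in Hineq; rewrite Ropp_involutive, <- two_mul_Gamma2_psi in Hineq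
      by (apply Hpos, Rle_refl).
    pose proof (equal_f (heat_flow_0 G f) v) as Hv; simpl in Hv.
    unfold u in Hineq; rewrite Hv, heat_flow_0 in Hineq.
    apply CD_ineq_scale in Hineq; auto.
Qed.
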